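(* Let $(x,y,p)$ be an optimal solution of the RMP and let $(\alpha,\beta,\gamma,\delta,\mu,\phi,\psi)$ be an optimal solution of the DRMP (so both have the same objective value). Then: (a) There exists a cost-invariant lifting of $(\alpha,\beta,\gamma,\delta,\mu,\phi,\psi)$ that is fully compensating and feasible for the DMP if and only if the characteristic lifting $(\alpha,\check\beta,\gamma,\check\delta,\mu,\phi,\psi)$ is fully compensating and feasible for the DMP. (b) Suppose the following three families of inequalities hold: 1. $\bar c_{b,l,m}\ge 0$ for all $b\in\mathcal B$, $l\in L(b)$, $m\in\mathcal M\setminus M(b,l)$; 2. for all $l\in\mathcal L'\setminus\bigcap_{b\in\mathcal B}L(b)$: $$-\sum_{b\in\mathcal B:\ l\notin L(b)}\Bigl(\min_{m\in\mathcal M}\bar c_{b,l,m}\Bigr)^-\ \ge\ \sum_{b\in\mathcal B:\ l\in L(b)}\beta_{b,l}-\gamma-\delta_l+\chi_l\mu;$$ 3. for all $l\in\mathcal L\setminus\mathcal L'$: $$-\sum_{b\in\mathcal B}\Bigl(\min_{m\in\mathcal M}\bar c_{b,l,m}\Bigr)^-+\Bigl(\min_{b\in\mathcal B,\,m\in\mathcal M}\bar c_{b,l,m}\Bigr)^+\ \ge\ -\gamma+\mu.$$ Then the vector $(\bar x,\bar y,\bar p)$ obtained from $(x,y,p)$ by setting all variables of the MP that are absent from the RMP to zero is an optimal solution of the MP. Moreover, these three families hold if and only if the characteristic lifting is fully compensating and feasible for the DMP; consequently, if any one of these inequalities is violated, then no cost-invariant lifting of $(\alpha,\beta,\gamma,\delta,\mu,\phi,\psi)$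 is both fully compensating and feasible for the DMP.
   Context: Let $\mathcal B$ (branches) and $\mathcal S$ (sizes) be finite nonempty sets, $\mathcal M\subset\mathbb N$ a finite nonempty set of multiplicities, and $\mathcal L\subset\mathbb N^{\mathcal S}$ a finite nonempty set of lot-types; for $l\in\mathcal L$ write $|l|:=\sum_{s\in\mathcal S}l_s$. Let costs $c_{b,l,m}\ge 0$ ($b\in\mathcal B,l\in\mathcal L,m\in\mathcal M$), an integer $k\ge 0$, reals $\underline I\le\overline I$ and a constant $P>0$ be given. Let $\mathcal L''\subseteq\mathcal L'\subseteq\mathcal L$, for each $b\in\mathcal B$ let $L(b)\subseteq\mathcal L'$, and for each $b$ and $l\in L(b)$ let $M(b,l)\subseteq\mathcal M$ be nonempty. Put $\chi_l:=1$ if $l\notin\mathcal L''$ and $\chi_l:=0$ if $l\in\mathcal L''$. For real $t$, $(t)^+:=\max\{t,0\}$ and $(t)^-:=\max\{-t,0\}$. Master problem (MP): the linear program in variables $x_{b,l,m}\ge0$ ($b\in\mathcal B,l\in\mathcal L,m\in\mathcal M$), $y_l\ge0$ ($l\in\mathcal L$), $p\ge 0$: minimize $\sum_{b,l,m}c_{b,l,m}x_{b,l,m}+Pp$ subject to ($\alpha_b$) $\sum_{l,m}x_{b,l,m}=1$ for all $b$; ($\beta_{b,l}$) $y_l-\sum_m x_{b,l,m}\ge 0$ for all $b,l$; ($\gamma$) $-\sum_l y_l\ge -k$; ($\delta_l$) $\sum_{b,m}x_{b,l,m}-y_l\ge0$ for all $l$; ($\mu$) $\sum_{l\in\mathcal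 L\setminus\mathcal L''}y_l+p\ge1$; ($\phi$) $\sum_{b,l,m}m|l|x_{b,l,m}\ge\underline I$; ($\psi$) $-\sum_{b,l,m}m|l|x_{b,l,m}\ge-\overline I$. The symbol in parentheses names the dual variable of each constraint. Restricted master problem (RMP): the same LP but containing only the variables $x_{b,l,m}$ with $l\in L(b)$, $m\in M(b,l)$, the variables $y_l$ with $l\in\mathcal L'$, and $p$; only the $\beta_{b,l}$-constraints with $l\in L(b)$ and the $\delta_l$-constraints with $l\in\mathcal L'$ are kept, and all sums are restricted to the present variables. Dual master problem (DMP): variables $\alpha_b\in\mathbb R$, $\beta_{b,l}\ge0$ (all $b\in\mathcal B,l\in\mathcal L$), $\gamma\ge0$, $\delta_l\ge0$ (all $l\in\mathcal L$), $\mu\ge0$, $\phi,\psi\ge0$; maximize $\sum_b\alpha_b-k\gamma+\underline I\phi-\overline I\psi+\mu$ subject to the $x$-constraints $\alpha_b-\beta_{b,l}+\delta_l+m|l|(\phi-\psi)\le c_{b,l,m}$ for all $b,l,m$, the $y$-constraints $\sum_{b\in\mathcal B}\beta_{b,l}-\gamma-\delta_l+\chi_l\mu\le 0$ for all $l\in\mathcal L$, and the $p$-constraint $\mu\le P$. The dual restricted master problem (DRMP) is the LP dual of the RMP: variables $\alpha_b$, $\beta_{b,l}$ ($l\in L(b)$), $\gamma$, $\delta_l$ ($l\in\mathcal L'$), $\mu,\phi,\psi$ with the same sign conditions and objective, $x$-constraints only for $l\in L(b)$, $m\in M(b,l)$, $y$-constraints $\sum_{b:\,l\in L(b)}\beta_{b,l}-\gamma-\delta_l+\chi_l\mu\le0$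 for $l\in\mathcal L'$, and $\mu\le P$. Given a DRMP solution $(\alpha,\beta,\gamma,\delta,\mu,\phi,\psi)$: its canonical lifting sets $\bar\beta_{b,l}:=\beta_{b,l}$ if $l\in L(b)$ and $0$ otherwise, $\bar\delta_l:=\delta_l$ if $l\in\mathcal L'$ and $0$ otherwise. The (uncompensated) reduced cost is $\bar c_{b,l,m}:=c_{b,l,m}-\alpha_b+\bar\beta_{b,l}-\bar\delta_l-m|l|(\phi-\psi)$ for all $b\in\mathcal B,l\in\mathcal L,m\in\mathcal M$. A cost-invariant lifting is any assignment $(\hat\alpha,\hat\beta,\hat\gamma,\hat\delta,\hat\mu,\hat\phi,\hat\psi)$ of all DMP variables that coincides with $(\alpha,\beta,\gamma,\delta,\mu,\phi,\psi)$ on all DRMP components and whose DMP objective equals the DRMP objective of $(\alpha,\ldots,\psi)$. It is fully compensating if it satisfies all $x$-constraints of the DMP. The characteristic lifting is $(\alpha,\check\beta,\gamma,\check\delta,\mu,\phi,\psi)$ with $\check\beta_{b,l}:=\beta_{b,l}$ if $l\in L(b)$ and $\check\beta_{b,l}:=(\min_{m\in\mathcal M}\bar c_{b,l,m})^-$ if $l\in\mathcal L\setminus L(b)$; $\check\delta_l:=\delta_l$ if $l\in\mathcal L'$ and $\check\delta_l:=(\min_{b\in\mathcal B,m\in\mathcal M}\bar c_{b,l,m})^+$ if $l\in\mathcal L\setminus\mathcal L'$. *)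

From HB Require Import structures.
From mathcomp Require Import all_boot all_order all_algebra.
Set Implicit Arguments. Unset Strict Implicit. Unset Printing Implicit Defensive.
Import Order.TTheory GRing.Theory Num.Theory.
Local Open Scope ring_scope.

Definition pospart {R : realDomainType} (t : R) : R := Num.max t 0.
Definition negpart {R : realDomainType} (t : R) : R := Num.max (- t) 0.

(* minimum of f over a (nonempty) finite type T; the value 0 for an empty T
   is never used, since all the index types below are nonempty. *)
Definition minf {R : realDomainType} (T : finType) (f : T -> R) : R :=
  match enum T with
  | [::] => 0
  | t0 :: _ => \big[Num.min/f t0]_(i : T) f i
  end.

Section MasterProblem.
Context {R : realFieldType} {B S Mt Lt : finType}.
(* mval m : multiplicity in N of m in M;  lval l s : entry of the lot-type l in N^S *)
Variables (mval : Mt -> nat) (lval : Lt -> S -> nat).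
Variables (c : B -> Lt -> Mt -> R) (k : nat) (Ilo Ihi P : R).
Variable (L'' : {set Lt}).

Definition lsize (l : Lt) : nat := (\sum_(s : S) lval l s)%N.
Definition coef (m : Mt) (l : Lt) : R := (mval m * lsize l)%:R.
Definition chi (l : Lt) : R := if l \in L'' then 0 else 1.

(* ---------- Primal LP with present variables given by Lb, Mb, L'
   (RMP; the MP is the special case where everything is present).
   Variables x, y are total functions; components of absent variables are
   ignored. *)
Definition prim_feasible (Lb : B -> {set Lt}) (Mb : B -> Lt -> {set Mt})
    (L' : {set Lt}) (x : B -> Lt -> Mt -> R) (y : Lt -> R) (p : R) : Prop :=
  (forall b l m, l \in Lb b -> m \in Mb b l -> 0 <= x b l m) /\
  (forall l, l \in L' -> 0 <= y l) /\
  0 <= p /\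
  (* alpha_b *)
  (forall b, \sum_(l in Lb b) \sum_(m in Mb b l) x b l m = 1) /\
  (* beta_{b,l} *)
  (forall b l, l \in Lb b -> 0 <= y l - \sum_(m in Mb b l) x b l m) /\
  (* gamma *)
  - (k%:R) <= - \sum_(l in L') y l /\
  (* delta_l *)
  (forall l, l \in L' ->
     0 <= \sum_(b : B | l \in Lb b) \sum_(m in Mb b l) x b l m - y l) /\
  (* mu *)
  1 <= \sum_(l in L' :\: L'') y l + p /\
  (* phi *)
  Ilo <= \sum_(b : B) \sum_(l in Lb b) \sum_(m in Mb b l) coef m l * x b l m /\
  (* psi *)
  - Ihi <= - \sum_(b : B) \sum_(l in Lb b) \sum_(m in Mb b l) coef m l * x b l m.

Definition prim_obj (Lb : B -> {set Lt}) (Mb : B -> Lt -> {set Mt})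
    (x : B -> Lt -> Mt -> R) (p : R) : R :=
  \sum_(b : B) \sum_(l in Lb b) \sum_(m in Mb b l) c b l m * x b l m + P * p.

Definition prim_optimal Lb Mb L' x y p : Prop :=
  prim_feasible Lb Mb L' x y p /\
  forall x' y' p', prim_feasible Lb Mb L' x' y' p' ->
    prim_obj Lb Mb x p <= prim_obj Lb Mb x' p'.

Definition mp_optimal x y p : Prop :=
  prim_optimal (fun _ => setT) (fun _ _ => setT) setT x y p.

Definition dual_xcons (alpha : B -> R) (beta : B -> Lt -> R) (delta : Lt -> R)
    (phi psi : R) (b : B) (l : Lt) (m : Mt) : Prop :=
  alpha b - beta b l + delta l + coef m l * (phi - psi) <= c b l m.

Definition dual_feasible (Lb : B -> {set Lt}) (Mb : B -> Lt -> {set Mt})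
    (L' : {set Lt}) (alpha : B -> R) (beta : B -> Lt -> R) (gamma : R)
    (delta : Lt -> R) (mu phi psi : R) : Prop :=
  (forall b l, l \in Lb b -> 0 <= beta b l) /\
  0 <= gamma /\
  (forall l, l \in L' -> 0 <= delta l) /\
  0 <= mu /\ 0 <= phi /\ 0 <= psi /\
  (forall b l m, l \in Lb b -> m \in Mb b l ->
     dual_xcons alpha beta delta phi psi b l m) /\
  (forall l, l \in L' ->
     \sum_(b : B | l \in Lb b) beta b l - gamma - delta l + chi l * mu <= 0) /\
  mu <= P.

Definition dual_obj (alpha : B -> R) (gamma mu phi psi : R) : R :=
  \sum_(b : B) alpha b - k%:R * gamma + Ilo * phi - Ihi * psi + mu.

Definition dual_optimal Lb Mb L' alpha beta gamma delta mu phi psi : Prop :=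
  dual_feasible Lb Mb L' alpha beta gamma delta mu phi psi /\
  forall alpha' beta' gamma' delta' mu' phi' psi',
    dual_feasible Lb Mb L' alpha' beta' gamma' delta' mu' phi' psi' ->
    dual_obj alpha' gamma' mu' phi' psi' <= dual_obj alpha gamma mu phi psi.

Definition dmp_feasible alpha beta gamma delta mu phi psi : Prop :=
  dual_feasible (fun _ => setT) (fun _ _ => setT) setT
    alpha beta gamma delta mu phi psi.

Definition fully_compensating alpha beta delta phi psi : Prop :=
  forall b l m, dual_xcons alpha beta delta phi psi b l m.

Definition cost_invariant_lifting (Lb : B -> {set Lt}) (L' : {set Lt})
    (alpha : B -> R) (beta : B -> Lt -> R) (gamma : R) (delta : Lt -> R)
    (mu phi psi : R)
    (alpha' : B -> R) (beta' : B -> Lt -> R) (gamma' : R) (delta' : Lt -> R)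
    (mu' phi' psi' : R) : Prop :=
  alpha' = alpha /\ gamma' = gamma /\ mu' = mu /\ phi' = phi /\ psi' = psi /\
  (forall b l, l \in Lb b -> beta' b l = beta b l) /\
  (forall l, l \in L' -> delta' l = delta l) /\
  dual_obj alpha' gamma' mu' phi' psi' = dual_obj alpha gamma mu phi psi.

Definition beta_bar (Lb : B -> {set Lt}) (beta : B -> Lt -> R) b l : R :=
  if l \in Lb b then beta b l else 0.
Definition delta_bar (L' : {set Lt}) (delta : Lt -> R) l : R :=
  if l \in L' then delta l else 0.

Definition redcost (Lb : B -> {set Lt}) (L' : {set Lt}) (alpha : B -> R)
    (beta : B -> Lt -> R) (delta : Lt -> R) (phi psi : R) b l m : R :=
  c b l m - alpha b + beta_bar Lb beta b l - delta_bar L' delta l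
    - coef m l * (phi - psi).

Definition beta_check (Lb : B -> {set Lt}) (L' : {set Lt}) (alpha : B -> R)
    (beta : B -> Lt -> R) (delta : Lt -> R) (phi psi : R) (b : B) (l : Lt) : R :=
  if l \in Lb b then beta b l
  else negpart (minf (fun m : Mt => redcost Lb L' alpha beta delta phi psi b l m)).
Definition delta_check (Lb : B -> {set Lt}) (L' : {set Lt}) (alpha : B -> R)
    (beta : B -> Lt -> R) (delta : Lt -> R) (phi psi : R) (l : Lt) : R :=
  if l \in L' then delta l
  else pospart (minf (fun bm : B * Mt =>
                        redcost Lb L' alpha beta delta phi psi bm.1 l bm.2)).

End MasterProblem.

(* Part (b) is weak LP duality: extending the RMP optimum by zeros gives an
   MP-feasible point of the same cost, so any DMP-feasible lifting of the
   DRMP optimum (which has that cost) certifies its optimality.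
   For (a), a lifting only chooses the missing beta_{b,l} and delta_l, and the
   x-constraint at (b,l,m) reads cbar + (beta' - betabar) - (delta' - deltabar)
   >= 0.  Hence beta'_{b,l} >= (min_m cbar_{b,l,m})^- for l in L' \ L(b), and
   for l outside L' the y-constraint asks for sum_b beta'_{b,l} - delta'_l <=
   gamma - mu; with a_b := min_m cbar_{b,l,m}, the least value of
   sum_b (d - a_b)^+ - d over d >= 0 is reached at d = (min_b a_b)^+.  So every
   admissible lifting forces the three conditions, and these say exactly that
   the characteristic lifting, which makes all these choices minimal, is
   admissible. *)

From HB Require Import structures.
From mathcomp Require Import all_boot all_order all_algebra.
From mathcomp Require Import ring lra.
Set Implicit Arguments. Unset Strict Implicit. Unset Printing Implicit Defensive.
Import Order.TTheory GRing.Theory Num.Theory.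
Local Open Scope ring_scope.

Section PosNegParts.
Variable R : realDomainType.
Implicit Types t a : R.

Lemma negpart_ge0 t : 0 <= negpart t.
Proof. by rewrite /negpart le_max lexx orbT. Qed.

Lemma lerN_negpart t : - t <= negpart t.
Proof. by rewrite /negpart le_max lexx. Qed.

Lemma negpart_le t a : 0 <= a -> - t <= a -> negpart t <= a.
Proof. by rewrite /negpart ge_max => -> ->. Qed.

Lemma pospart_ge0 t : 0 <= pospart t.
Proof. by rewrite /pospart le_max lexx orbT. Qed.

Lemma ler_pospart t : t <= pospart t.
Proof. by rewrite /pospart le_max lexx. Qed.

Lemma pospart_le t a : 0 <= a -> t <= a -> pospart t <= a.
Proof. by rewrite /pospart ge_max => -> ->. Qed.

Lemma minf_le (T : finType) (f : T -> R) i : minf f <= f i.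
Proof.
rewrite /minf; have : i \in enum T by rewrite mem_enum.
by case: (enum T) => [//|t0 _ _]; apply: bigmin_le.
Qed.

Lemma minf_attained (T : finType) (f : T -> R) (i0 : T) : exists i, minf f = f i.
Proof.
rewrite /minf; have : i0 \in enum T by rewrite mem_enum.
case: (enum T) => [//|t0 _ _].
apply: (big_ind (fun v => exists i, v = f i)); first by exists t0.
- by move=> _ _ [i ->] [j ->]; case: leP => _; [exists i | exists j].
- by move=> i _; exists i.
Qed.

End PosNegParts.

Lemma big_setT (R : Type) (idx : R) (op : R -> R -> R) (I : finType) (F : I -> R) :
  \big[op/idx]_(i in [set: I]) F i = \big[op/idx]_i F i.
Proof. by apply: eq_bigl => i; rewrite in_setT. Qed.

Section Compensation.
Variable R : realFieldType.

Lemma negpart_minf_le (J : finType) (f : J -> R) (u d : R) (j0 : J) :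
  0 <= d -> 0 <= u -> (forall j, d <= f j + u) -> negpart (minf f) <= u.
Proof.
move=> d0 u0 hf; have [j ->] := minf_attained f j0.
by apply: negpart_le => //; have := hf j; lra.
Qed.

Lemma sum_negpart_minf_le (I J : finType) (f : I -> J -> R) (u : I -> R) (d : R)
    (i0 : I) (j0 : J) :
  0 <= d -> (forall i, 0 <= u i) -> (forall i j, d <= f i j + u i) ->
  \sum_i negpart (minf (f i)) - pospart (minf (fun ij : I * J => f ij.1 ij.2))
    <= \sum_i u i - d.
Proof.
move=> d0 u0 hf.
have [[i1 j1] /= ->] := minf_attained (fun ij : I * J => f ij.1 ij.2) (i0, j0).
rewrite (bigD1 i1) //= [X in _ <= X - _](bigD1 i1) //=.
have rest : \sum_(i | i != i1) negpart (minf (f i)) <= \sum_(i | i != i1) u i.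
  by apply: ler_sum => i _; apply: (negpart_minf_le j0 d0).
have first : negpart (minf (f i1)) <= u i1 - d + pospart (f i1 j1).
  have [j2 ->] := minf_attained (f i1) j0.
  have := hf i1 j1; have := hf i1 j2.
  have := ler_pospart (f i1 j1); have := pospart_ge0 (f i1 j1).
  by move=> *; apply: negpart_le; lra.
lra.
Qed.

End Compensation.

Section WeakDuality.
Variables (R : realFieldType) (B S Mt Lt : finType).
Variables (mval : Mt -> nat) (lval : Lt -> S -> nat).
Variables (c : B -> Lt -> Mt -> R) (k : nat) (Ilo Ihi P : R).
Variables (L'' L' : {set Lt}) (Lb : B -> {set Lt}) (Mb : B -> Lt -> {set Mt}).
Hypothesis hLb : forall b, Lb b \subset L'.

Local Notation coef := (coef mval lval).

Lemma sum_chi_mul (y : Lt -> R) :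
  \sum_(l in L') chi L'' l * y l = \sum_(l in L' :\: L'') y l.
Proof.
rewrite [RHS](eq_bigl (fun l => (l \in L') && (l \notin L''))); last first.
  by move=> l; rewrite !inE andbC.
by rewrite big_mkcondr; apply: eq_bigr => l _; rewrite /chi; case: ifP => _;
  rewrite ?mul0r ?mul1r.
Qed.

Lemma dual_xcons_sum x al be de ph ps b l :
  (forall m, m \in Mb b l -> 0 <= x b l m) ->
  (forall m, m \in Mb b l -> dual_xcons mval lval c al be de ph ps b l m) ->
  (al b - be b l + de l) * \sum_(m in Mb b l) x b l m
    + (ph - ps) * \sum_(m in Mb b l) coef m l * x b l m
  <= \sum_(m in Mb b l) c b l m * x b l m.
Proof.
move=> x0 hxc; rewrite !mulr_sumr -big_split ler_sum // => m hm.
have slack := hxc m hm; rewrite /dual_xcons -subr_ge0 in slack.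
rewrite -subr_ge0 /=.
have -> : c b l m * x b l m - ((al b - be b l + de l) * x b l m
    + (ph - ps) * (coef m l * x b l m))
  = (c b l m - (al b - be b l + de l + coef m l * (ph - ps))) * x b l m by ring.
exact: mulr_ge0 slack (x0 m hm).
Qed.

Lemma weak_duality x y p al be ga de mu ph ps :
  prim_feasible mval lval k Ilo Ihi L'' Lb Mb L' x y p ->
  dual_feasible mval lval c P L'' Lb Mb L' al be ga de mu ph ps ->
  dual_obj k Ilo Ihi al ga mu ph ps <= prim_obj c P Lb Mb x p.
Proof.
case=> x0 [y0 [p0 [hal [hbe [hga [hde [hmu [hphi hpsi]]]]]]]].
case=> be0 [ga0 [de0 [mu0 [ph0 [ps0 [hxc [hyc muP]]]]]]].
set X := fun b l => \sum_(m in Mb b l) x b l m.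
set T := \sum_b \sum_(l in Lb b) \sum_(m in Mb b l) coef m l * x b l m in hphi hpsi *.
set D := fun b l => de l * X b l - be b l * y l.
have entry b l : l \in Lb b ->
    al b * X b l + D b l + (ph - ps) * \sum_(m in Mb b l) coef m l * x b l m
    <= \sum_(m in Mb b l) c b l m * x b l m.
  move=> hl; have : be b l * X b l <= be b l * y l.
    by apply: ler_wpM2l; [exact: be0 | have := hbe b l hl; rewrite /X; lra].
  have := dual_xcons_sum (x0 b l ^~ hl) (hxc b l ^~ hl).
  by rewrite /D /X; lra.
have cost : \sum_b al b + \sum_b \sum_(l in Lb b) D b l + (ph - ps) * T
            <= \sum_b \sum_(l in Lb b) \sum_(m in Mb b l) c b l m * x b l m.
  rewrite /T mulr_sumr -!big_split ler_sum // => b _.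
  rewrite mulr_sumr -[al b]mulr1 -(hal b) mulr_sumr -!big_split ler_sum //.
  exact: entry.
have flow : - ga * \sum_(l in L') y l + mu * \sum_(l in L' :\: L'') y l
            <= \sum_b \sum_(l in Lb b) D b l.
  rewrite (exchange_big_dep (mem L')) /=; last by move=> b l _; apply/subsetP.
  rewrite -sum_chi_mul !mulr_sumr -big_split ler_sum // => l hl /=.
  rewrite /D big_split /= sumrN -mulr_sumr -mulr_suml.
  have : (\sum_(b | l \in Lb b) be b l) * y l <= (ga + de l - chi L'' l * mu) * y l.
    by apply: ler_wpM2r; [exact: y0 | have := hyc l hl; lra].
  have : de l * y l <= de l * \sum_(b | l \in Lb b) X b l.
    by apply: ler_wpM2l; [exact: de0 | have := hde l hl; rewrite /X; lra].
  lra.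
have : ga * \sum_(l in L') y l <= ga * k%:R by apply: ler_wpM2l => //; lra.
have : mu <= mu * (\sum_(l in L' :\: L'') y l + p).
  by rewrite -{1}[mu]mulr1 ler_wpM2l.
have : mu * p <= P * p by apply: ler_wpM2r.
have : ph * Ilo <= ph * T by apply: ler_wpM2l.
have : ps * T <= ps * Ihi by apply: ler_wpM2l => //; lra.
rewrite /dual_obj /prim_obj; lra.
Qed.

End WeakDuality.

Section MasterProblem.
Variables (R : realFieldType) (B S Mt Lt : finType).
Variables (mval : Mt -> nat) (lval : Lt -> S -> nat).
Variables (c : B -> Lt -> Mt -> R) (k : nat) (Ilo Ihi P : R) (L'' : {set Lt}).

Local Notation full_Lb := (fun _ : B => [set: Lt]).
Local Notation full_Mb := (fun (_ : B) (_ : Lt) => [set: Mt]).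

Lemma mp_optimal_of_duality x y p al be ga de mu ph ps :
  prim_feasible mval lval k Ilo Ihi L'' full_Lb full_Mb [set: Lt] x y p ->
  dmp_feasible mval lval c P L'' al be ga de mu ph ps ->
  prim_obj c P full_Lb full_Mb x p = dual_obj k Ilo Ihi al ga mu ph ps ->
  mp_optimal mval lval c k Ilo Ihi P L'' x y p.
Proof.
move=> feas dfeas eq_obj; split=> // x' y' p' feas'.
by rewrite eq_obj; apply: (weak_duality (fun=> subsetT _) feas' dfeas).
Qed.

End MasterProblem.

Section Extension.
Variables (R : realFieldType) (B S Mt Lt : finType).
Variables (mval : Mt -> nat) (lval : Lt -> S -> nat).
Variables (c : B -> Lt -> Mt -> R) (k : nat) (Ilo Ihi P : R).
Variables (L'' L' : {set Lt}) (Lb : B -> {set Lt}) (Mb : B -> Lt -> {set Mt}).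
Hypothesis hLb : forall b, Lb b \subset L'.
Variables (x : B -> Lt -> Mt -> R) (y : Lt -> R).

Local Notation full_Lb := (fun _ : B => [set: Lt]).
Local Notation full_Mb := (fun (_ : B) (_ : Lt) => [set: Mt]).

Definition extend_x b l m := if (l \in Lb b) && (m \in Mb b l) then x b l m else 0.
Definition extend_y l := if l \in L' then y l else 0.

Lemma sum_extend_x (F : Mt -> R) b l :
  \sum_(m in [set: Mt]) F m * extend_x b l m
  = if l \in Lb b then \sum_(m in Mb b l) F m * x b l m else 0.
Proof.
rewrite big_setT /extend_x; case: (l \in Lb b) => /=.
  by rewrite [RHS]big_mkcond; apply: eq_bigr => m _; case: (m \in Mb b l); rewrite ?mulr0.
by rewrite big1 // => m; rewrite mulr0.
Qed.

Lemma sum2_extend_x (F : Lt -> Mt -> R) b :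
  \sum_(l in [set: Lt]) \sum_(m in [set: Mt]) F l m * extend_x b l m
  = \sum_(l in Lb b) \sum_(m in Mb b l) F l m * x b l m.
Proof.
by rewrite big_setT [RHS]big_mkcond; apply: eq_bigr => l _; rewrite sum_extend_x.
Qed.

Lemma extend_obj p :
  prim_obj c P full_Lb full_Mb extend_x p = prim_obj c P Lb Mb x p.
Proof.
by rewrite /prim_obj; congr (_ + _); apply: eq_bigr => b _; rewrite sum2_extend_x.
Qed.

Lemma extend_feasible p :
  prim_feasible mval lval k Ilo Ihi L'' Lb Mb L' x y p ->
  prim_feasible mval lval k Ilo Ihi L'' full_Lb full_Mb [set: Lt] extend_x extend_y p.
Proof.
case=> x0 [y0 [p0 [hal [hbe [hga [hde [hmu hI]]]]]]].
have sumx b l : \sum_(m in [set: Mt]) extend_x b l m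
    = if l \in Lb b then \sum_(m in Mb b l) x b l m else 0.
  rewrite big_setT /extend_x; case: (l \in Lb b) => /=; last by rewrite big1.
  by rewrite [RHS]big_mkcond.
have ey l : 0 <= extend_y l by rewrite /extend_y; case: ifP => // /y0.
have sumy (A : {set Lt}) :
    \sum_(l in [set: Lt] :&: A) extend_y l = \sum_(l in L' :&: A) y l.
  rewrite big_mkcond [RHS]big_mkcond; apply: eq_bigr => l _.
  by rewrite /extend_y !inE; case: (l \in A); case: (l \in L').
split.
  by move=> b l m _ _; rewrite /extend_x; case: ifP => [/andP [hl hm] | _]; [exact: x0 |].
do 2 split=> //.
split; first by move=> b; rewrite big_setT -(hal b) [RHS]big_mkcond; apply: eq_bigr => l _.
split.
  move=> b l _; rewrite sumx /extend_y; case: (boolP (l \in Lb b)) => hl.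
    by rewrite (subsetP (hLb b) l hl); exact: hbe.
  by rewrite subr0; exact: ey.
split; first by move: hga (sumy [set: Lt]); rewrite !setIT => ? ->.
split.
  move=> l _; rewrite in_setT (eq_bigr _ (fun b _ => sumx b l)) -big_mkcond.
  rewrite /extend_y; case: ifP => hl'; first exact: hde.
  rewrite big_pred0 ?subrr // => b.
  by apply: negbTE; apply: contraFN hl'; apply/subsetP.
split; first by move: hmu (sumy (~: L'')); rewrite !setDE setTI => ? ->.
by rewrite (eq_bigr _ (fun b _ => sum2_extend_x _ b)).
Qed.

End Extension.

Section Liftings.
Variables (R : realFieldType) (B S Mt Lt : finType).
Variables (mval : Mt -> nat) (lval : Lt -> S -> nat).
Variables (c : B -> Lt -> Mt -> R) (P : R).
Variables (L'' L' : {set Lt}) (Lb : B -> {set Lt}) (Mb : B -> Lt -> {set Mt}).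
Hypotheses (hL'' : L'' \subset L') (hLb : forall b, Lb b \subset L').
Variables (alpha : B -> R) (beta : B -> Lt -> R) (gamma : R) (delta : Lt -> R).
Variables (mu phi psi : R).
Hypothesis drmp : dual_feasible mval lval c P L'' Lb Mb L'
  alpha beta gamma delta mu phi psi.
Variables (b0 : B) (m0 : Mt).

Local Notation cbar := (redcost mval lval c Lb L' alpha beta delta phi psi).
Local Notation betac := (beta_check mval lval c Lb L' alpha beta delta phi psi).
Local Notation deltac := (delta_check mval lval c Lb L' alpha beta delta phi psi).

Definition lifts (be : B -> Lt -> R) (de : Lt -> R) : Prop :=
  (forall b l, l \in Lb b -> be b l = beta b l) /\
  (forall l, l \in L' -> de l = delta l).

Definition admissible_lifting (be : B -> Lt -> R) (de : Lt -> R) : Prop :=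
  fully_compensating mval lval c alpha be de phi psi /\
  dmp_feasible mval lval c P L'' alpha be gamma de mu phi psi.

Definition absent_mult_cond : Prop :=
  forall b l m, l \in Lb b -> m \notin Mb b l -> 0 <= cbar b l m.

Definition partial_lot_cond : Prop :=
  forall l, l \in L' :\: \bigcap_(b : B) Lb b ->
    - \sum_(b : B | l \notin Lb b) negpart (minf (fun m : Mt => cbar b l m))
    >= \sum_(b : B | l \in Lb b) beta b l - gamma - delta l + chi L'' l * mu.

Definition absent_lot_cond : Prop :=
  forall l, l \in ~: L' ->
    - \sum_(b : B) negpart (minf (fun m : Mt => cbar b l m))
      + pospart (minf (fun bm : B * Mt => cbar bm.1 l bm.2))
    >= - gamma + mu.

Lemma chi_notin l : l \notin L' -> chi L'' l = 1 :> R.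
Proof.
by move=> hl; rewrite /chi; case: ifP => // /(subsetP hL''); rewrite (negbTE hl).
Qed.

Lemma notin_Lb b l : l \notin L' -> l \notin Lb b.
Proof. by apply: contra; apply/subsetP. Qed.

Lemma dual_xcons_redcost (be : B -> Lt -> R) (de : Lt -> R) b l m :
  dual_xcons mval lval c alpha be de phi psi b l m <->
  0 <= cbar b l m + (be b l - beta_bar Lb beta b l) - (de l - delta_bar L' delta l).
Proof. by rewrite /dual_xcons /redcost; split=> h; lra. Qed.

Lemma dual_xcons_present be de b l m : lifts be de -> l \in Lb b ->
  dual_xcons mval lval c alpha be de phi psi b l m <-> 0 <= cbar b l m.
Proof.
case=> hbe hde hl; have hl' := subsetP (hLb b) l hl.
by rewrite dual_xcons_redcost /beta_bar /delta_bar hl hl' hbe // hde // !subrr subr0 addr0.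
Qed.

Lemma lifts_check : lifts betac deltac.
Proof. by split=> [b l | l] hl; rewrite /beta_check /delta_check hl. Qed.

Lemma redcost_present_ge0 b l m : l \in Lb b -> m \in Mb b l -> 0 <= cbar b l m.
Proof.
have [_ [_ [_ [_ [_ [_ [hxc _]]]]]]] := drmp.
by move=> hl hm; apply/(dual_xcons_present (be:=beta) (de:=delta)) => //; exact: hxc.
Qed.

Lemma fully_compensating_check_iff :
  fully_compensating mval lval c alpha betac deltac phi psi <-> absent_mult_cond.
Proof.
split=> [fc b l m hl _ | c1 b l m]; first exact/(dual_xcons_present m lifts_check hl).
case: (boolP (l \in Lb b)) => hl.
  apply/(dual_xcons_present m lifts_check hl).
  by case: (boolP (m \in Mb b l)) => hm; [exact: redcost_present_ge0 | exact: c1].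
rewrite dual_xcons_redcost /beta_check /delta_check /beta_bar /delta_bar (negbTE hl).
set a := minf _; have ha : a <= cbar b l m by exact: minf_le.
have hn := lerN_negpart a; have hn0 := negpart_ge0 a; case: ifP => hl'; first lra.
set G := minf _; have hG : G <= cbar b l m by exact: (minf_le _ (b, m)).
have : pospart G <= cbar b l m + negpart a by apply: pospart_le; lra.
lra.
Qed.

Lemma sum_beta_check l :
  \sum_b betac b l = \sum_(b | l \in Lb b) beta b l
    + \sum_(b | l \notin Lb b) negpart (minf (fun m : Mt => cbar b l m)).
Proof.
rewrite (bigID (fun b => l \in Lb b)) /=.
by congr (_ + _); apply: eq_bigr => b hl; rewrite /beta_check ?hl ?(negbTE hl).
Qed.

Lemma sum_beta_check_absent l : l \notin L' ->
  \sum_b betac b l = \sum_b negpart (minf (fun m : Mt => cbar b l m)).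
Proof.
by move=> hl; apply: eq_bigr => b _; rewrite /beta_check (negbTE (notin_Lb b hl)).
Qed.

Lemma check_ycons_iff :
  (forall l, \sum_b betac b l - gamma - deltac l + chi L'' l * mu <= 0) <->
  partial_lot_cond /\ absent_lot_cond.
Proof.
split=> [hy | [c2 c3] l].
  split=> l; rewrite !inE.
    by case/andP=> _ hl'; have := hy l; rewrite sum_beta_check /delta_check hl'; lra.
  move=> hl'; have := hy l; rewrite sum_beta_check_absent // /delta_check.
  by rewrite (negbTE hl') chi_notin //; lra.
case: (boolP (l \in L')) => hl'; last first.
  have := c3 l; rewrite inE hl' sum_beta_check_absent // /delta_check (negbTE hl').
  by rewrite chi_notin //; lra.
rewrite sum_beta_check /delta_check hl'.
case: (boolP (l \in \bigcap_b Lb b)) => hcap; last first.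
  by have := c2 l; rewrite !inE hcap hl' => /(_ isT); lra.
have [_ [_ [_ [_ [_ [_ [_ [hyc _]]]]]]]] := drmp.
move/bigcapP: hcap => hcap.
rewrite [X in _ + X - _ - _ + _]big_pred0 ?addr0 => [|b]; last by rewrite hcap.
exact: hyc.
Qed.

Lemma check_admissible_iff :
  admissible_lifting betac deltac <->
  absent_mult_cond /\ partial_lot_cond /\ absent_lot_cond.
Proof.
have [be0 [ga0 [de0 [mu0 [ph0 [ps0 [_ [_ muP]]]]]]]] := drmp.
split=> [[fc [_ [_ [_ [_ [_ [_ [_ [hy _]]]]]]]]] | [c1 c23]].
  split; first exact/fully_compensating_check_iff.
  by apply/check_ycons_iff => l; have := hy l (in_setT l); rewrite in_setT.
have fc := fully_compensating_check_iff.2 c1; have hy := check_ycons_iff.2 c23.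
split=> //; split.
  by move=> b l _; rewrite /beta_check; case: ifP => [/be0 | _] //; exact: negpart_ge0.
split=> //; split.
  by move=> l _; rewrite /delta_check; case: ifP => [/de0 | _] //; exact: pospart_ge0.
do 3 split=> //; split; first by move=> b l m _ _; exact: fc.
by split=> // l _; rewrite in_setT; exact: hy.
Qed.

Lemma admissible_lifting_conds be de : lifts be de -> admissible_lifting be de ->
  absent_mult_cond /\ partial_lot_cond /\ absent_lot_cond.
Proof.
move=> hlift [fc [be0 [_ [de0 [_ [_ [_ [_ [hy _]]]]]]]]].
have {}be0 b l : 0 <= be b l by exact: be0.
have {}de0 l : 0 <= de l by exact: de0.
have {}hy l : \sum_b be b l - gamma - de l + chi L'' l * mu <= 0.
  by have := hy l (in_setT l); rewrite in_setT.
have slack b l m : l \notin Lb b ->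
    de l - delta_bar L' delta l <= cbar b l m + be b l.
  by move=> hl; have /dual_xcons_redcost := fc b l m; rewrite /beta_bar (negbTE hl); lra.
split; [|split] => [b l m hl _ | l | l]; rewrite ?inE.
- exact/(dual_xcons_present m hlift hl).
- case/andP=> _ hl'.
  have bound : \sum_(b | l \notin Lb b) negpart (minf (fun m : Mt => cbar b l m))
                <= \sum_(b | l \notin Lb b) be b l.
    apply: ler_sum => b hl; apply: (negpart_minf_le m0 (lexx 0)) => // m.
    by have := slack b l m hl; rewrite /delta_bar hl' hlift.2 // subrr.
  have := hy l; rewrite (bigID (fun b => l \in Lb b)) /=.
  rewrite (eq_bigr (fun b => beta b l)) => [|b hl]; last exact: hlift.1.
  by rewrite hlift.2 //; lra.
- move=> hl'.
  have bound : \sum_b negpart (minf (fun m : Mt => cbar b l m))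
      - pospart (minf (fun bm : B * Mt => cbar bm.1 l bm.2)) <= \sum_b be b l - de l.
    apply: (@sum_negpart_minf_le _ _ _ (fun b m => cbar b l m) (fun b => be b l) _ b0 m0)
      => // b m.
    by have := slack b l m (notin_Lb b hl'); rewrite /delta_bar (negbTE hl') subr0.
  by have := hy l; rewrite chi_notin //; lra.
Qed.

End Liftings.

Theorem theorem1
  (R : realFieldType) (B S Mt Lt : finType)
  (* nonempty finite index sets; M ⊂ N and L ⊂ N^S given by injective labels *)
  (hB : (0 < #|B|)%N) (hS : (0 < #|S|)%N) (hM : (0 < #|Mt|)%N) (hL : (0 < #|Lt|)%N)
  (mval : Mt -> nat) (hmval : injective mval)
  (lval : Lt -> S -> nat) (hlval : injective lval)
  (c : B -> Lt -> Mt -> R) (hc : forall b l m, 0 <= c b l m)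
  (k : nat) (Ilo Ihi : R) (hI : Ilo <= Ihi) (P : R) (hP : 0 < P)
  (L'' L' : {set Lt}) (hL'' : L'' \subset L')
  (Lb : B -> {set Lt}) (hLb : forall b, Lb b \subset L')
  (Mb : B -> Lt -> {set Mt}) (hMb : forall b l, l \in Lb b -> Mb b l != set0)
  (* components of x, y at variables absent from the RMP are irrelevant *)
  (x : B -> Lt -> Mt -> R) (y : Lt -> R) (p : R)
  (hx : prim_optimal mval lval c k Ilo Ihi P L'' Lb Mb L' x y p)
  (alpha : B -> R) (beta : B -> Lt -> R) (gamma : R) (delta : Lt -> R)
  (mu phi psi : R)
  (hd : dual_optimal mval lval c k Ilo Ihi P L'' Lb Mb L'
          alpha beta gamma delta mu phi psi)
  (hobj : prim_obj c P Lb Mb x p = dual_obj k Ilo Ihi alpha gamma mu phi psi) :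
  let cbar := redcost mval lval c Lb L' alpha beta delta phi psi in
  let betac := beta_check mval lval c Lb L' alpha beta delta phi psi in
  let deltac := delta_check mval lval c Lb L' alpha beta delta phi psi in
  let good_lifting_exists :=
    exists (alpha' : B -> R) (beta' : B -> Lt -> R) (gamma' : R)
           (delta' : Lt -> R) (mu' phi' psi' : R),
      cost_invariant_lifting k Ilo Ihi Lb L' alpha beta gamma delta mu phi psi
        alpha' beta' gamma' delta' mu' phi' psi' /\
      fully_compensating mval lval c alpha' beta' delta' phi' psi' /\
      dmp_feasible mval lval c P L'' alpha' beta' gamma' delta' mu' phi' psi' in
  let char_good :=
    fully_compensating mval lval c alpha betac deltac phi psi /\
    dmp_feasible mval lval c P L'' alpha betac gamma deltac mu phi psi in
  let cond1 := forall b l m, l \in Lb b -> m \notin Mb b l -> 0 <= cbar b l m in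
  let cond2 := forall l, l \in L' :\: \bigcap_(b : B) Lb b ->
      - \sum_(b : B | l \notin Lb b) negpart (minf (fun m : Mt => cbar b l m))
      >= \sum_(b : B | l \in Lb b) beta b l - gamma - delta l + chi L'' l * mu in
  let cond3 := forall l, l \in ~: L' ->
      - \sum_(b : B) negpart (minf (fun m : Mt => cbar b l m))
        + pospart (minf (fun bm : B * Mt => cbar bm.1 l bm.2))
      >= - gamma + mu in
  let xbar := fun b l m => if (l \in Lb b) && (m \in Mb b l) then x b l m else 0 in
  let ybar := fun l => if l \in L' then y l else 0 in
  (good_lifting_exists <-> char_good) /\
  ((cond1 /\ cond2 /\ cond3) -> mp_optimal mval lval c k Ilo Ihi P L'' xbar ybar p) /\
  ((cond1 /\ cond2 /\ cond3) <-> char_good) /\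
  (~ (cond1 /\ cond2 /\ cond3) -> ~ good_lifting_exists).
Proof.
move=> cbar betac deltac good char_good cond1 cond2 cond3 xbar ybar.
have [[rmp _] [drmp _]] := (hx, hd).
case/card_gt0P: hB => b0 _; case/card_gt0P: hM => m0 _.
have conds_char : cond1 /\ cond2 /\ cond3 <-> char_good.
  exact: iff_sym (check_admissible_iff hL'' hLb drmp).
have good_conds : good -> cond1 /\ cond2 /\ cond3.
  case=> _ [be [_ [de [_ [_ [_ [[-> [-> [-> [-> [-> [hbe [hde _]]]]]]] adm]]]]]]].
  exact: (admissible_lifting_conds Mb hL'' hLb b0 m0 (conj hbe hde) adm).
have char_good_lifting : char_good -> good.
  move=> cg; exists alpha, betac, gamma, deltac, mu, phi, psi; split=> //.
  have [hbe hde] : lifts L' Lb beta delta betac deltac by exact: lifts_check.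
  by do 7 split=> //.
have optimal : cond1 /\ cond2 /\ cond3 -> mp_optimal mval lval c k Ilo Ihi P L'' xbar ybar p.
  case/conds_char=> _ dmp.
  by apply: (mp_optimal_of_duality (extend_feasible hLb rmp) dmp); rewrite extend_obj.
split; first by split=> [/good_conds/conds_char | /char_good_lifting].
by do 2 split=> //; move=> nconds /good_conds.
Qed.
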